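(* Let $f$ be as in the setting below and satisfy condition (i); fix $m\in\mathbb N$, $\bar p\in[0,1]^{g_f^m}$, $\epsilon>0$ and $0<s\le1$. Suppose there are a strictly increasing sequence $(M_k)_{k=1}^\infty$ of natural numbers and $0\le c<1$ such that \[ N^s_\infty\big([0,1)\cap G^{f,m}_{\bar p}(M_k,\epsilon)\big)<\frac{c}{K_f^s}\quad\text{for all }k. \] Then for each cylinder $C\subset[0,1)$ of $f$ there is $K_C$ such that $N^s_\infty\big(C\cap G^{f,m}_{\bar p}(M_k,\epsilon/2)\big)<c|C|^s$ for all $k>K_C$.
   Context: Setting: $f\colon[0,1)\to[0,1)$ and $g_f\ge 2$ is an integer such that $[0,1)$ is partitioned into $g_f$ half-open intervals $[a,b)$, enumerated as $[0],\dots,[g_f-1]$, such that on each of them $f$ is monotone and maps onto $[0,1)$, and $|f(x)-f(y)|\ge |x-y|$ for all $x,y$ in the same interval. For a word $x_1\dots x_n$ over $\{0,\dots,g_f-1\}$ the generation-$n$ cylinder is $C_{x_1\dots x_n}=\{x\in[0,1): f^{i-1}(x)\in[x_i],\ i=1,\dots,n\}$; $[0,1)$ is the generation-$0$ cylinder. It is assumed that $|C_{x_1\dots x_n}|\to 0$ as $n\to\infty$ for every $(x_i)\in\{0,\dots,g_f-1\}^{\mathbb N}$, so each $x\in[0,1)$ has a unique coding sequence $(x_i)_{i\ge1}$ (its $f$-expansion). Condition (i) (bounded distortion): there is $K_f>0$ such that for every cylinder $C_{x_1\dots x_n}$ (including $[0,1)$), $|(f^n)'(y)|/|(f^n)'(z)|<K_f$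 for all $y,z\in C_{x_1\dots x_n}$. Frequencies: enumerate the words of length $m$ as $w_1,\dots,w_{g_f^m}$; for $n>m$, $\tau^f_w(x,n)=\#\{i\in\{1,\dots,n-m\}: x_i\dots x_{i+m-1}=w\}$, and $G^{f,m}_{\bar p}(n,\epsilon)=\{x\in[0,1): p_{w_j}-\epsilon<\tau^f_{w_j}(x,n)/(n-m)<p_{w_j}+\epsilon\ \forall j\}$ (a union of generation-$n$ cylinders). $N^s_\infty(F)=\inf\{\sum_i |C_i|^s: F\subset\bigcup_i C_i\}$, the infimum over countable covers by cylinders of $f$. *)

From Stdlib Require Import Reals Lra Lia List Arith ClassicalEpsilon.
Import ListNotations.
Open Scope R_scope.

Definition is_glb_R (S : R -> Prop) (v : R) : Prop :=
  (forall t, S t -> v <= t) /\ (forall u, (forall t, S t -> u <= t) -> u <= v).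

(** Diameter |A| = sup { |x - y| : x, y in A } (A nonempty bounded; otherwise
    an unspecified value). For cylinders (intervals) this is their length. *)
Definition diam (A : R -> Prop) : R :=
  epsilon (inhabits 0)
    (is_lub (fun r => exists x y, A x /\ A y /\ r = Rabs (x - y))).

Definition rpow (t s : R) : R :=
  if Rle_dec t 0 then 0 else Rpower t s.

Definition Interval (a : nat -> R) (i : nat) (x : R) : Prop :=
  a i <= x < a (S i).

Definition valid_word (g : nat) (w : list nat) : Prop :=
  forall j, In j w -> (j < g)%nat.

(** Cylinder C_{x_1...x_n} = {x in [0,1) : f^(i-1)(x) in [x_i], i = 1..n}
    (0-indexed here: f^i(x) in [nth i w]). The empty word gives [0,1). *)
Definition Cyl (a : nat -> R) (f : R -> R) (w : list nat) (x : R) : Prop :=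
  0 <= x < 1 /\
  forall i, (i < length w)%nat -> Interval a (nth i w 0%nat) (Nat.iter i f x).

(** The (i+1)-th digit x_{i+1} of the f-expansion of x: the j < g with
    f^i(x) in [j]. *)
Definition digit (a : nat -> R) (g : nat) (f : R -> R) (x : R) (i : nat) : nat :=
  epsilon (inhabits 0%nat)
    (fun j => (j < g)%nat /\ Interval a j (Nat.iter i f x)).

Definition block (a : nat -> R) (g : nat) (f : R -> R) (x : R) (k len : nat)
  : list nat :=
  map (fun t => digit a g f x (k + t)) (seq 0 len).

(** tau_w(x,n) = #{ i in {1..n-m} : x_i ... x_{i+m-1} = w }, m = length w. *)
Definition tau (a : nat -> R) (g : nat) (f : R -> R) (w : list nat) (x : R)
  (n : nat) : nat :=
  length (filter
    (fun k => if list_eq_dec Nat.eq_dec (block a g f x k (length w)) w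
              then true else false)
    (seq 0 (n - length w))).

Definition Gset (a : nat -> R) (g : nat) (f : R -> R) (m : nat)
  (p : list nat -> R) (n : nat) (eps : R) (x : R) : Prop :=
  0 <= x < 1 /\
  forall w, length w = m -> valid_word g w ->
    p w - eps < INR (tau a g f w x n) / INR (n - m) < p w + eps.

(** Countable (finite or infinite) covers by cylinders: a sequence of
    optional words (None = no set). *)
Definition cyl_cover (a : nat -> R) (g : nat) (f : R -> R)
  (F : R -> Prop) (ws : nat -> option (list nat)) : Prop :=
  (forall i w, ws i = Some w -> valid_word g w) /\
  (forall x, F x -> exists i w, ws i = Some w /\ Cyl a f w x).

Definition cover_term (a : nat -> R) (f : R -> R) (s : R)
  (ws : nat -> option (list nat)) (i : nat) : R :=
  match ws i with
  | None => 0
  | Some w => rpow (diam (Cyl a f w)) s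
  end.

Definition Ninf (a : nat -> R) (g : nat) (f : R -> R) (s : R) (F : R -> Prop) : R :=
  epsilon (inhabits 0)
    (is_glb_R (fun t => exists ws, cyl_cover a g f F ws /\
                                   infinite_sum (cover_term a f s ws) t)).

Definition HasDerivWithin (S : R -> Prop) (h : R -> R) (x l : R) : Prop :=
  forall e, 0 < e -> exists d, 0 < d /\
    forall t, t <> 0 -> Rabs t < d -> S (x + t) ->
      Rabs ((h (x + t) - h x) / t - l) < e.

Definition setting (a : nat -> R) (g : nat) (f : R -> R) : Prop :=
  (2 <= g)%nat /\
  a 0%nat = 0 /\ a g = 1 /\ (forall i, (i < g)%nat -> a i < a (S i)) /\
  (forall x, 0 <= x < 1 -> 0 <= f x < 1) /\
  (forall i, (i < g)%nat ->
     ((forall x y, Interval a i x -> Interval a i y -> x <= y -> f x <= f y) \/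
      (forall x y, Interval a i x -> Interval a i y -> x <= y -> f y <= f x))) /\
  (forall i y, (i < g)%nat -> 0 <= y < 1 -> exists x, Interval a i x /\ f x = y) /\
  (forall i x y, (i < g)%nat -> Interval a i x -> Interval a i y ->
     Rabs (x - y) <= Rabs (f x - f y)) /\
  (forall xs : nat -> nat, (forall i, (xs i < g)%nat) ->
     forall e, 0 < e -> exists N, forall n, (N <= n)%nat ->
       diam (Cyl a f (map xs (seq 0 n))) < e).

Definition bounded_distortion (a : nat -> R) (g : nat) (f : R -> R) (K : R) : Prop :=
  forall w, valid_word g w ->
    forall y z, Cyl a f w y -> Cyl a f w z ->
      exists dy dz,
        HasDerivWithin (Cyl a f w) (Nat.iter (length w) f) y dy /\
        HasDerivWithin (Cyl a f w) (Nat.iter (length w) f) z dz /\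
        Rabs dy < K * Rabs dz.

(** Fix a cylinder [C_w] of generation [n = |w|] and put [h = f^n]. The map [h]
  sends [C_w] onto [[0,1)], so by the mean value theorem its derivative
  somewhere exceeds about [1/|C_w|]; bounded distortion spreads this lower
  bound (up to the constant [K]) over all of [C_w], which gives, for every
  cylinder [C_v],
        |C_{wv}| <= K |C_w| |C_v|                      (cylinder_product_bound).
  Shifting an orbit by [n] steps changes each word count [tau_u(x, M)] by at
  most [n], so once [n <= (eps/2)(M - m)] the map [h] sends [C_w ∩ G(M, eps/2)]
  into [G(M, eps)] (Gset_shift). Prefixing [w] to a cylinder cover [{C_v}] of
  [G(M, eps)] then covers [C_w ∩ G(M, eps/2)] with [s]-sum at most
  [K^s |C_w|^s] times larger (Ninf_pullback), and the hypothesis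
  [N^s_oo(G(M_k, eps)) < c / K^s] yields the theorem for all large [k].
*)

From Stdlib Require Import Reals Lra Lia List ClassicalEpsilon.
Import ListNotations.
Open Scope R_scope.

Lemma valid_app : forall g w v, valid_word g w -> valid_word g v -> valid_word g (w ++ v).
Proof. intros g w v Hw Hv j Hj. apply in_app_or in Hj. destruct Hj; auto. Qed.

Section Cylinders.
Variables (a : nat -> R) (g : nat) (f : R -> R).
Hypothesis Hset : setting a g f.

Lemma partition_nonneg : forall i, (i <= g)%nat -> 0 <= a i.
Proof.
  destruct Hset as [_ [H0 [_ [Hinc _]]]].
  induction i; intros Hi; [lra|].
  assert (a i < a (S i)) by (apply Hinc; lia). specialize (IHi ltac:(lia)). lra.
Qed.

Lemma partition_le_1 : forall i, (i <= g)%nat -> a i <= 1.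
Proof.
  destruct Hset as [_ [_ [H1 [Hinc _]]]].
  intros i Hi. remember (g - i)%nat as k. revert i Hi Heqk.
  induction k; intros i Hi Hk.
  - replace i with g by lia. lra.
  - assert (a i < a (S i)) by (apply Hinc; lia).
    specialize (IHk (S i) ltac:(lia) ltac:(lia)). lra.
Qed.

Lemma Interval_unit : forall j x, (j < g)%nat -> Interval a j x -> 0 <= x < 1.
Proof.
  intros j x Hj [H1 H2].
  pose proof (partition_nonneg j ltac:(lia)). pose proof (partition_le_1 (S j) ltac:(lia)).
  lra.
Qed.

Lemma iter_unit : forall n x, 0 <= x < 1 -> 0 <= Nat.iter n f x < 1.
Proof.
  destruct Hset as [_ [_ [_ [_ [Hf _]]]]].
  induction n; intros x Hx; simpl; auto.
Qed.

Lemma Cyl_nil : forall x, Cyl a f [] x <-> 0 <= x < 1.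
Proof.
  intros x; unfold Cyl; split; [tauto|].
  intros H; split; auto. intros i Hi; simpl in Hi; lia.
Qed.

Lemma Cyl_cons : forall j w x,
  Cyl a f (j :: w) x <-> (0 <= x < 1 /\ Interval a j x /\ Cyl a f w (f x)).
Proof.
  intros j w x; unfold Cyl; split.
  - intros [Hx H]. split; [auto|split].
    + apply (H 0%nat); simpl; lia.
    + split; [apply (iter_unit 1); auto|]. intros i Hi.
      specialize (H (S i) ltac:(simpl; lia)).
      rewrite Nat.iter_succ_r in H. exact H.
  - intros [Hx [Hj [_ H]]]. split; auto. intros i Hi. destruct i; [simpl; auto|].
    simpl nth. rewrite Nat.iter_succ_r. apply H. simpl in Hi; lia.
Qed.

Lemma Cyl_unit : forall w x, Cyl a f w x -> 0 <= x < 1.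
Proof. intros w x H; apply H. Qed.

Lemma Cyl_app : forall w v x,
  Cyl a f (w ++ v) x <-> (Cyl a f w x /\ Cyl a f v (Nat.iter (length w) f x)).
Proof.
  induction w as [|j w IH]; intros v x.
  - rewrite app_nil_l, Cyl_nil. simpl Nat.iter. split; [|tauto].
    intros H; split; [apply (Cyl_unit v x H)|auto].
  - rewrite <- app_comm_cons, !Cyl_cons, IH. simpl length.
    rewrite Nat.iter_succ_r. tauto.
Qed.

Lemma Cyl_surj : forall w, valid_word g w -> forall y, 0 <= y < 1 ->
  exists x, Cyl a f w x /\ Nat.iter (length w) f x = y.
Proof.
  destruct Hset as [_ [_ [_ [_ [_ [_ [Hon _]]]]]]].
  induction w as [|j w IH]; intros Hv y Hy.
  - exists y. split; [apply Cyl_nil; auto|reflexivity].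
  - assert (Hj : (j < g)%nat) by (apply Hv; simpl; auto).
    assert (Hv' : valid_word g w) by (intros k Hk; apply Hv; simpl; auto).
    destruct (IH Hv' y Hy) as [x' [Hx' Hx'y]].
    destruct (Hon j x' Hj (Cyl_unit _ _ Hx')) as [x [Hxj Hfx]].
    exists x. split.
    + apply Cyl_cons. split; [apply (Interval_unit j); auto|]. split; auto. rewrite Hfx; auto.
    + simpl length. rewrite Nat.iter_succ_r, Hfx. auto.
Qed.

Lemma Cyl_nonempty : forall w, valid_word g w -> exists x, Cyl a f w x.
Proof.
  intros w Hw. destruct (Cyl_surj w Hw 0 ltac:(lra)) as [x [Hx _]]. eauto.
Qed.

(** Cylinders are intervals: each [f] is monotone on the partition intervals. *)
Lemma Cyl_convex : forall w, valid_word g w -> forall x y z,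
  Cyl a f w x -> Cyl a f w y -> x <= z <= y -> Cyl a f w z.
Proof.
  destruct Hset as [_ [_ [_ [_ [_ [Hmono _]]]]]].
  induction w as [|j w IH]; intros Hv x y z Hx Hy Hz.
  - apply Cyl_nil. apply Cyl_nil in Hx, Hy. lra.
  - assert (Hj : (j < g)%nat) by (apply Hv; simpl; auto).
    assert (Hv' : valid_word g w) by (intros k Hk; apply Hv; simpl; auto).
    apply Cyl_cons in Hx, Hy. destruct Hx as [_ [Hxj Hxf]], Hy as [_ [Hyj Hyf]].
    assert (Hzj : Interval a j z) by (destruct Hxj, Hyj; split; lra).
    apply Cyl_cons. split; [apply (Interval_unit j); auto|]. split; auto.
    destruct (Hmono j Hj) as [Mon|Mon].
    + apply (IH Hv' (f x) (f y)); auto. split; apply Mon; auto; lra.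
    + apply (IH Hv' (f y) (f x)); auto. split; apply Mon; auto; lra.
Qed.

End Cylinders.

Lemma diam_lub : forall A : R -> Prop, (exists x, A x) -> (forall x, A x -> 0 <= x < 1) ->
  is_lub (fun r => exists x y, A x /\ A y /\ r = Rabs (x - y)) (diam A).
Proof.
  intros A [x0 Hx0] HA. unfold diam. apply epsilon_spec.
  destruct (completeness (fun r => exists x y, A x /\ A y /\ r = Rabs (x - y))) as [l Hl].
  - exists 1. intros r [x [y [Hx [Hy ->]]]]. apply HA in Hx. apply HA in Hy.
    unfold Rabs; destruct Rcase_abs; lra.
  - exists (Rabs (x0 - x0)), x0, x0. auto.
  - exists l; auto.
Qed.

Lemma diam_ub : forall A : R -> Prop, (forall x, A x -> 0 <= x < 1) ->
  forall x y, A x -> A y -> Rabs (x - y) <= diam A.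
Proof.
  intros A HA x y Hx Hy. apply (diam_lub A (ex_intro _ x Hx) HA). exists x, y. auto.
Qed.

Lemma diam_le : forall A : R -> Prop, (exists x, A x) -> (forall x, A x -> 0 <= x < 1) ->
  forall B, 0 <= B -> (forall x y, A x -> A y -> x < y -> y - x <= B) -> diam A <= B.
Proof.
  intros A Hne HA B HB0 HB. apply (diam_lub A Hne HA).
  intros r [x [y [Hx [Hy ->]]]]. destruct (Rtotal_order x y) as [H|[H|H]].
  - rewrite Rabs_minus_sym, Rabs_right by lra. auto.
  - subst. rewrite Rminus_diag, Rabs_R0. auto.
  - rewrite Rabs_right by lra. auto.
Qed.

Lemma diam_Cyl_nonneg : forall a g f, setting a g f ->
  forall w, valid_word g w -> 0 <= diam (Cyl a f w).
Proof.
  intros a g f Hset w Hw. destruct (Cyl_nonempty a g f Hset w Hw) as [x Hx].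
  apply Rle_trans with (Rabs (x - x)); [apply Rabs_pos|].
  apply diam_ub; auto. apply Cyl_unit.
Qed.

(** Cylinders are nondegenerate: [C_w] contains points sent to 0 and to 1/2. *)
Lemma diam_Cyl_pos : forall a g f, setting a g f ->
  forall w, valid_word g w -> 0 < diam (Cyl a f w).
Proof.
  intros a g f Hset w Hw.
  destruct (Cyl_surj a g f Hset w Hw 0 ltac:(lra)) as [u [Su Hu]].
  destruct (Cyl_surj a g f Hset w Hw (1/2) ltac:(lra)) as [u' [Su' Hu']].
  assert (u <> u') by (intros E; subst; lra).
  apply Rlt_le_trans with (Rabs (u - u')); [apply Rabs_pos_lt; lra|].
  apply diam_ub; auto. apply Cyl_unit.
Qed.

Lemma rpow_nonneg : forall t s, 0 <= rpow t s.
Proof. intros t s; unfold rpow; destruct Rle_dec; [lra|]. left; apply exp_pos. Qed.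

Lemma rpow_pos : forall t s, 0 < t -> 0 < rpow t s.
Proof. intros t s H; unfold rpow; destruct Rle_dec; [lra|]. apply exp_pos. Qed.

Lemma rpow_mono : forall x y s, 0 <= s -> 0 <= x <= y -> rpow x s <= rpow y s.
Proof.
  intros x y s Hs Hxy; unfold rpow. destruct (Rle_dec x 0), (Rle_dec y 0).
  - lra.
  - left; apply exp_pos.
  - lra.
  - apply Rle_Rpower_l; lra.
Qed.

Lemma rpow_mult : forall x y s, 0 < x -> 0 < y -> rpow (x * y) s = rpow x s * rpow y s.
Proof.
  intros x y s Hx Hy; unfold rpow.
  destruct (Rle_dec (x * y) 0); [nra|]. destruct (Rle_dec x 0); [lra|].
  destruct (Rle_dec y 0); [lra|]. symmetry; apply Rpower_mult_distr; auto.
Qed.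

Lemma deriv_bound : forall S h c l, HasDerivWithin S h c l ->
  exists d, 0 < d /\ forall t, Rabs t < d -> S (c + t) ->
    Rabs (h (c + t) - h c) <= (Rabs l + 1) * Rabs t.
Proof.
  intros S h c l H. destruct (H 1 Rlt_0_1) as [d [Hd Hq]]. exists d; split; auto.
  intros t Ht HS. destruct (Req_dec t 0) as [->|Ht0].
  - rewrite Rplus_0_r, Rminus_diag, !Rabs_R0. lra.
  - specialize (Hq t Ht0 Ht HS).
    replace (h (c + t) - h c) with (((h (c + t) - h c) / t - l + l) * t) by (field; auto).
    rewrite Rabs_mult. apply Rmult_le_compat_r; [apply Rabs_pos|].
    pose proof (Rabs_triang ((h (c + t) - h c) / t - l) l). lra.
Qed.

(** [clamp a b] is the retraction of [R] onto [[a,b]]; composing with it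
    extends a function on [[a,b]] to all of [R]. *)
Definition clamp (a b t : R) : R := Rmin (Rmax t a) b.

Lemma clamp_in : forall a b t, a <= b -> a <= clamp a b t <= b.
Proof. intros; unfold clamp, Rmin, Rmax; repeat destruct Rle_dec; lra. Qed.

Lemma clamp_id : forall a b t, a <= t <= b -> clamp a b t = t.
Proof. intros; unfold clamp, Rmin, Rmax; repeat destruct Rle_dec; lra. Qed.

Lemma clamp_close : forall a b t c, a <= c <= b -> Rabs (clamp a b t - c) <= Rabs (t - c).
Proof.
  intros; unfold clamp, Rmin, Rmax; repeat destruct Rle_dec;
  unfold Rabs; repeat destruct Rcase_abs; lra.
Qed.

(** Mean value theorem for a function that is differentiable within an
    interval [S] (derivatives are one-sided at the endpoints of [S]). *)
Section MeanValueWithin.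
Variables (S : R -> Prop) (h : R -> R).
Hypothesis S_convex : forall x y z, S x -> S y -> x <= z <= y -> S z.

Lemma deriv_unique : forall a b c l1 l2, S a -> S b -> a < c < b ->
  HasDerivWithin S h c l1 -> HasDerivWithin S h c l2 -> l1 = l2.
Proof.
  intros a b c l1 l2 Ha Hb Hc H1 H2.
  destruct (Req_dec l1 l2) as [E|NE]; auto. exfalso.
  set (e := Rabs (l1 - l2) / 2).
  assert (He : 0 < e) by (unfold e; pose proof (Rabs_pos_lt (l1 - l2) ltac:(lra)); lra).
  destruct (H1 e He) as [d1 [Hd1 H1']]. destruct (H2 e He) as [d2 [Hd2 H2']].
  set (t := Rmin (Rmin d1 d2) (b - c) / 2).
  pose proof (Rmin_l (Rmin d1 d2) (b - c)). pose proof (Rmin_r (Rmin d1 d2) (b - c)).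
  pose proof (Rmin_l d1 d2). pose proof (Rmin_r d1 d2).
  assert (Ht : 0 < t) by (unfold t; repeat apply Rmin_case; lra).
  assert (HS : S (c + t)) by (apply (S_convex a b); auto; unfold t in *; lra).
  assert (Hta : Rabs t = t) by (apply Rabs_right; lra).
  specialize (H1' t ltac:(lra) ltac:(unfold t in *; lra) HS).
  specialize (H2' t ltac:(lra) ltac:(unfold t in *; lra) HS).
  set (q := (h (c + t) - h c) / t) in *.
  assert (Rabs (l1 - l2) <= Rabs (q - l1) + Rabs (q - l2)).
  { replace (l1 - l2) with (- (q - l1) + (q - l2)) by ring.
    eapply Rle_trans; [apply Rabs_triang|]. rewrite Rabs_Ropp. lra. }
  unfold e in *. lra.
Qed.

Lemma derivable_clamped : forall a b c l, S a -> S b -> a < c < b ->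
  HasDerivWithin S h c l -> derivable_pt_lim (fun t => h (clamp a b t)) c l.
Proof.
  intros a b c l Ha Hb Hc Hl e He.
  destruct (Hl e He) as [d [Hd H]].
  assert (Hdel : 0 < Rmin d (Rmin (c - a) (b - c))) by (repeat apply Rmin_case; lra).
  exists (mkposreal _ Hdel). simpl. intros t Ht0 Ht.
  pose proof (Rmin_l d (Rmin (c - a) (b - c))). pose proof (Rmin_r d (Rmin (c - a) (b - c))).
  pose proof (Rmin_l (c - a) (b - c)). pose proof (Rmin_r (c - a) (b - c)).
  assert (Ht' : - Rabs t <= t <= Rabs t) by (unfold Rabs; destruct Rcase_abs; lra).
  rewrite !clamp_id by lra.
  apply H; [auto|lra|]. apply (S_convex a b); auto; lra.
Qed.

Lemma continuous_clamped : forall a b c l, S a -> S b -> a <= c <= b ->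
  HasDerivWithin S h c l -> continuity_pt (fun t => h (clamp a b t)) c.
Proof.
  intros a b c l Ha Hb Hc Hl e He.
  destruct (deriv_bound S h c l Hl) as [d [Hd Hlip]].
  set (L := Rabs l + 1).
  assert (HL : 0 < L) by (unfold L; pose proof (Rabs_pos l); lra).
  exists (Rmin d (e / L)). split; [apply Rmin_case; auto; apply Rdiv_lt_0_compat; auto|].
  intros z [_ Hz]. simpl in *. unfold Rdist in *.
  rewrite (clamp_id a b c) by lra.
  pose proof (clamp_close a b z c Hc) as Hcl.
  pose proof (clamp_in a b z ltac:(lra)) as Hci.
  pose proof (Rmin_l d (e / L)). pose proof (Rmin_r d (e / L)).
  specialize (Hlip (clamp a b z - c) ltac:(lra)).
  replace (c + (clamp a b z - c)) with (clamp a b z) in Hlip by ring.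
  specialize (Hlip (S_convex a b _ Ha Hb Hci)). fold L in Hlip.
  apply Rle_lt_trans with (L * Rabs (z - c)).
  - apply Rle_trans with (1 := Hlip). apply Rmult_le_compat_l; lra.
  - replace e with (L * (e / L)) by (field; lra). apply Rmult_lt_compat_l; lra.
Qed.

Hypothesis h_derivable : forall x, S x -> exists l, HasDerivWithin S h x l.

(** Via the clamped extension, Stdlib's [MVT] applies; the derivative it
    produces is the derivative within [S] by uniqueness at interior points. *)
Lemma mvt_within : forall a b, S a -> S b -> a < b ->
  exists c, a < c < b /\ forall l, HasDerivWithin S h c l -> h b - h a = l * (b - a).
Proof.
  intros a b Ha Hb Hab.
  set (D := fun x => epsilon (inhabits 0) (fun l => HasDerivWithin S h x l)).
  assert (HD : forall x, S x -> HasDerivWithin S h x (D x))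
    by (intros x Hx; apply epsilon_spec; auto).
  assert (Sab : forall c, a <= c <= b -> S c) by (intros c Hc; apply (S_convex a b); auto).
  set (ht := fun t => h (clamp a b t)).
  set (pr := fun c (P : a < c < b) =>
    exist (fun l => derivable_pt_lim ht c l) (D c)
      (derivable_clamped a b c (D c) Ha Hb P (HD c (Sab c ltac:(lra))))).
  assert (Hcont : forall c, a <= c <= b -> continuity_pt ht c)
    by (intros c Hc; apply (continuous_clamped a b c (D c)); auto).
  destruct (MVT ht id a b pr (fun c _ => derivable_pt_id c) Hab Hcont
    (fun c _ => derivable_continuous_pt _ _ (derivable_pt_id c))) as [c [P Hc]].
  exists c. split; auto. intros l Hl.
  rewrite (deriv_unique a b c l (D c) Ha Hb P Hl (HD c (Sab c ltac:(lra)))).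
  rewrite derive_pt_id in Hc. simpl in Hc. unfold ht, id in Hc.
  rewrite !clamp_id in Hc by lra. lra.
Qed.

Lemma mvt_abs : forall a b, S a -> S b -> a <> b ->
  exists c, S c /\ forall l, HasDerivWithin S h c l ->
    Rabs (h b - h a) = Rabs l * Rabs (b - a).
Proof.
  intros a b Ha Hb Hab.
  destruct (Rlt_or_le a b) as [Hlt|Hle].
  - destruct (mvt_within a b Ha Hb Hlt) as [c [Hc1 Hc2]].
    exists c. split; [apply (S_convex a b); auto; lra|].
    intros l Hl. rewrite (Hc2 l Hl), Rabs_mult. auto.
  - destruct (mvt_within b a Hb Ha ltac:(lra)) as [c [Hc1 Hc2]].
    exists c. split; [apply (S_convex b a); auto; lra|].
    intros l Hl. rewrite (Rabs_minus_sym (h b)), (Hc2 l Hl), Rabs_mult, (Rabs_minus_sym b).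
    auto.
Qed.

End MeanValueWithin.

Lemma le_of_fraction_le : forall r B, 0 <= B ->
  (forall t, 0 < t < 1 -> t * r <= B) -> r <= B.
Proof.
  intros r B HB H. apply Rnot_lt_le. intros Hr.
  set (t := (r + B) / (2 * r)).
  assert (Ht : 0 < t < 1).
  { unfold t. split; [apply Rdiv_lt_0_compat; lra|].
    apply (Rmult_lt_reg_r (2 * r)); [lra|]. unfold Rdiv.
    rewrite Rmult_assoc, Rinv_l by lra. lra. }
  specialize (H t Ht). replace (t * r) with ((r + B) / 2) in H by (unfold t; field; lra).
  lra.
Qed.

Section Distortion.
Variables (a : nat -> R) (g : nat) (f : R -> R) (K : R).
Hypothesis Hset : setting a g f.
Hypothesis HK : 0 < K.
Hypothesis Hdist : bounded_distortion a g f K.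
Variable w : list nat.
Hypothesis Hw : valid_word g w.

Local Notation Cw := (Cyl a f w).
Local Notation hw := (Nat.iter (length w) f).

Let Cw_convex : forall x y z, Cw x -> Cw y -> x <= z <= y -> Cw z.
Proof. exact (Cyl_convex a g f Hset w Hw). Qed.

Let hw_derivable : forall x, Cw x -> exists l, HasDerivWithin Cw hw x l.
Proof.
  intros x Hx. destruct (Hdist w Hw x x Hx Hx) as [dy [_ [Hdy _]]]. eauto.
Qed.

(** Since [f^|w|] maps [C_w] onto [[0,1)], somewhere its derivative is at
    least about [1/|C_w|]; by distortion this holds up to [K] everywhere. *)
Lemma expansion_lower_bound : forall c, Cw c -> forall t, 0 < t < 1 ->
  exists l, HasDerivWithin Cw hw c l /\ t <= K * Rabs l * diam Cw.
Proof.
  intros c Hc t Ht.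
  destruct (Cyl_surj a g f Hset w Hw 0 ltac:(lra)) as [u [Cu Hu]].
  destruct (Cyl_surj a g f Hset w Hw t ltac:(lra)) as [u' [Cu' Hu']].
  assert (Huu : u <> u') by (intros E; subst; lra).
  destruct (mvt_abs Cw hw Cw_convex hw_derivable u u' Cu Cu' Huu) as [c2 [Cc2 Hc2]].
  destruct (Hdist w Hw c2 c Cc2 Hc) as [dy [dz [Hdy [Hdz Hlt]]]].
  exists dz. split; auto.
  specialize (Hc2 dy Hdy). rewrite Hu, Hu', Rminus_0_r, Rabs_right in Hc2 by lra.
  assert (Hdiam : Rabs (u' - u) <= diam Cw) by (apply diam_ub; auto; apply Cyl_unit).
  rewrite Hc2. apply Rle_trans with (Rabs dy * diam Cw).
  - apply Rmult_le_compat_l; auto. apply Rabs_pos.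
  - apply Rmult_le_compat_r; [apply (diam_Cyl_nonneg a g f Hset w Hw)|lra].
Qed.

(** Gaps inside [C_{wv}] are contracted by [f^|w|] by a factor [K |C_w|] at
    most, and land in [C_v]. *)
Lemma cylinder_gap_bound : forall v, valid_word g v -> forall x y,
  Cyl a f (w ++ v) x -> Cyl a f (w ++ v) y -> x < y ->
  y - x <= K * diam Cw * diam (Cyl a f v).
Proof.
  intros v Hv x y Hx Hy Hxy.
  apply (Cyl_app a g f Hset) in Hx, Hy. destruct Hx as [Cx Vx], Hy as [Cy Vy].
  pose proof (diam_Cyl_nonneg a g f Hset w Hw) as HdS.
  pose proof (diam_Cyl_nonneg a g f Hset v Hv) as Hdv.
  destruct (mvt_within Cw hw Cw_convex hw_derivable x y Cx Cy Hxy) as [c [Hc Hmvt]].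
  assert (Cc : Cw c) by (apply (Cw_convex x y); auto; lra).
  assert (HhV : Rabs (hw y - hw x) <= diam (Cyl a f v)) by (apply diam_ub; auto; apply Cyl_unit).
  apply le_of_fraction_le; [apply Rmult_le_pos; [apply Rmult_le_pos|]; lra|].
  intros t Ht.
  destruct (expansion_lower_bound c Cc t Ht) as [l [Hl Ht']].
  rewrite (Hmvt l Hl), Rabs_mult, (Rabs_right (y - x)) in HhV by lra.
  apply Rle_trans with (K * Rabs l * diam Cw * (y - x)).
  - apply Rmult_le_compat_r; lra.
  - replace (K * Rabs l * diam Cw * (y - x)) with (K * diam Cw * (Rabs l * (y - x))) by ring.
    apply Rmult_le_compat_l; [apply Rmult_le_pos|]; lra.
Qed.

Lemma cylinder_product_bound : forall v, valid_word g v ->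
  diam (Cyl a f (w ++ v)) <= K * diam Cw * diam (Cyl a f v).
Proof.
  intros v Hv. apply diam_le.
  - apply (Cyl_nonempty a g f Hset). apply valid_app; auto.
  - apply Cyl_unit.
  - pose proof (diam_Cyl_nonneg a g f Hset w Hw). pose proof (diam_Cyl_nonneg a g f Hset v Hv).
    apply Rmult_le_pos; [apply Rmult_le_pos|]; lra.
  - apply cylinder_gap_bound; auto.
Qed.

End Distortion.

Lemma block_shift : forall a g f n y k len,
  block a g f (Nat.iter n f y) k len = block a g f y (n + k) len.
Proof.
  intros. unfold block. apply map_ext. intros t. unfold digit.
  rewrite <- Nat.iter_add. replace (k + t + n)%nat with (n + k + t)%nat by lia. reflexivity.
Qed.

Lemma count_shift : forall (P : nat -> bool) n L st,
  length (filter (fun k => P (n + k)%nat) (seq st L)) = length (filter P (seq (n + st) L)).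
Proof.
  intros P n L. induction L as [|L IH]; intros st; [reflexivity|].
  simpl. destruct (P (n + st)%nat); simpl; rewrite IH;
  replace (n + S st)%nat with (S (n + st)) by lia; reflexivity.
Qed.

(** Shifting the orbit by [n] steps changes every word count by at most [n]:
    the two counting windows differ in at most [n] positions at each end. *)
Lemma tau_shift : forall a g f u y n M,
  (tau a g f u (Nat.iter n f y) M <= tau a g f u y M + n)%nat /\
  (tau a g f u y M <= tau a g f u (Nat.iter n f y) M + n)%nat.
Proof.
  intros. unfold tau.
  set (P := fun k => if list_eq_dec Nat.eq_dec (block a g f y k (length u)) u then true else false).
  set (L := (M - length u)%nat).
  rewrite (filter_ext _ (fun k => P (n + k)%nat))
    by (intros k; unfold P; rewrite block_shift; reflexivity).
  rewrite count_shift, Nat.add_0_r. fold P.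
  pose proof (f_equal (fun l => length (filter P l)) (seq_app n L 0)) as E1.
  pose proof (f_equal (fun l => length (filter P l)) (seq_app L n 0)) as E2.
  simpl in E1, E2. rewrite filter_app, length_app in E1, E2.
  replace (L + n)%nat with (n + L)%nat in E2 by lia.
  pose proof (filter_length_le P (seq 0 n)). pose proof (filter_length_le P (seq L n)).
  rewrite length_seq in *. lia.
Qed.

(** If [n <= (eps/2)(M - m)], then [f^n] maps [G(M, eps/2)] into [G(M, eps)]:
    the frequencies move by at most [n/(M - m) <= eps/2]. *)
Lemma Gset_shift : forall a g f m p M eps n x, setting a g f -> (m < M)%nat ->
  INR n <= eps / 2 * INR (M - m) ->
  Gset a g f m p M (eps / 2) x -> Gset a g f m p M eps (Nat.iter n f x).
Proof.
  intros a g f m p M eps n x Hset HmM Hn [Hx Gx].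
  split; [apply (iter_unit a g f Hset); auto|].
  intros v Hvl Hvv. specialize (Gx v Hvl Hvv).
  assert (HL : 0 < INR (M - m)) by (apply lt_0_INR; lia).
  assert (Hshift : Rabs (INR (tau a g f v (Nat.iter n f x) M) - INR (tau a g f v x M)) <= INR n).
  { destruct (tau_shift a g f v x n M) as [T1 T2].
    apply le_INR in T1, T2. rewrite plus_INR in T1, T2.
    unfold Rabs; destruct Rcase_abs; lra. }
  assert (Hdiff : Rabs (INR (tau a g f v (Nat.iter n f x) M) / INR (M - m)
                        - INR (tau a g f v x M) / INR (M - m)) <= eps / 2).
  { unfold Rdiv. rewrite <- Rmult_minus_distr_r, Rabs_mult, (Rabs_right (/ _))
      by (left; apply Rinv_0_lt_compat; auto).
    apply (Rmult_le_reg_r (INR (M - m))); auto.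
    rewrite Rmult_assoc, Rinv_l by lra. lra. }
  revert Hdiff. unfold Rabs; destruct Rcase_abs; lra.
Qed.

Definition cover_sum (a : nat -> R) (g : nat) (f : R -> R) (s : R) (F : R -> Prop) (t : R)
  : Prop :=
  exists ws, cyl_cover a g f F ws /\ infinite_sum (cover_term a f s ws) t.

Lemma cover_term_nonneg : forall a f s ws i, 0 <= cover_term a f s ws i.
Proof. intros. unfold cover_term. destruct (ws i); [apply rpow_nonneg|lra]. Qed.

Lemma cover_sum_nonneg : forall a g f s F t, cover_sum a g f s F t -> 0 <= t.
Proof.
  intros a g f s F t [ws [_ Hsum]].
  apply Rle_trans with (sum_f_R0 (cover_term a f s ws) 0).
  - apply cover_term_nonneg.
  - apply sum_incr; [exact Hsum|apply cover_term_nonneg].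
Qed.

(** Every subset of [0,1) is covered by the single cylinder [C_∅ = [0,1)]. *)
Lemma cover_sum_exists : forall a g f s F, (forall x, F x -> 0 <= x < 1) ->
  exists t, cover_sum a g f s F t.
Proof.
  intros a g f s F HF.
  set (ws := fun i : nat => if Nat.eqb i 0 then Some (@nil nat) else None).
  exists (cover_term a f s ws 0), ws. split; [split|].
  - intros i w H. unfold ws in H. destruct (Nat.eqb i 0); inversion H.
    intros j Hj; inversion Hj.
  - intros x Hx. exists 0%nat, nil. split; [reflexivity|]. apply Cyl_nil; auto.
  - intros e He. exists 0%nat. intros n _.
    replace (sum_f_R0 (cover_term a f s ws) n) with (cover_term a f s ws 0).
    + unfold Rdist. rewrite Rminus_diag, Rabs_R0. auto.
    + induction n as [|n IH]; [reflexivity|]. simpl. rewrite <- IH.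
      unfold cover_term at 3. simpl. ring.
Qed.

Lemma Ninf_glb : forall a g f s F, (forall x, F x -> 0 <= x < 1) ->
  is_glb_R (cover_sum a g f s F) (Ninf a g f s F).
Proof.
  intros a g f s F HF. unfold Ninf. apply epsilon_spec. fold (cover_sum a g f s F).
  destruct (cover_sum_exists a g f s F HF) as [t0 Ht0].
  destruct (completeness (fun r => cover_sum a g f s F (- r))) as [l [Hub Hleast]].
  - exists 0. intros r Hr. apply cover_sum_nonneg in Hr. lra.
  - exists (- t0). rewrite Ropp_involutive. auto.
  - exists (- l). split.
    + intros t Ht. assert (- t <= l) by (apply Hub; rewrite Ropp_involutive; auto). lra.
    + intros u Hu. assert (l <= - u) by (apply Hleast; intros r Hr; apply Hu in Hr; lra).
      lra.
Qed.

Definition prefix_cover (w : list nat) (ws : nat -> option (list nat)) : nat -> option (list nat) :=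
  fun i => option_map (app w) (ws i).

(** Pulling back along [f^|w|]: if [F ⊆ C_w] and [f^|w|(F) ⊆ X], every cover
    of [X] yields a cover of [F] whose [s]-sum is at most [K^s |C_w|^s] times
    larger; hence [N^s_oo(F) <= K^s |C_w|^s N^s_oo(X)]. *)
Section Pullback.
Variables (a : nat -> R) (g : nat) (f : R -> R) (K s : R).
Hypothesis Hset : setting a g f.
Hypothesis HK : 0 < K.
Hypothesis Hdist : bounded_distortion a g f K.
Hypothesis Hs : 0 <= s.
Variable w : list nat.
Hypothesis Hw : valid_word g w.

Local Notation scale := (rpow K s * rpow (diam (Cyl a f w)) s).

Lemma scale_pos : 0 < scale.
Proof.
  apply Rmult_lt_0_compat; apply rpow_pos; auto. apply (diam_Cyl_pos a g f Hset w Hw).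
Qed.

(** Termwise: [|C_{wv}|^s <= K^s |C_w|^s |C_v|^s] by the distortion estimate. *)
Lemma cover_term_prefix : forall ws, (forall i v, ws i = Some v -> valid_word g v) ->
  forall i, cover_term a f s (prefix_cover w ws) i <= cover_term a f s ws i * scale.
Proof.
  intros ws Hws i. unfold cover_term, prefix_cover.
  destruct (ws i) as [v|] eqn:E; simpl; [|lra].
  assert (Hv := Hws i v E).
  pose proof (diam_Cyl_pos a g f Hset w Hw). pose proof (diam_Cyl_pos a g f Hset v Hv).
  apply Rle_trans with (rpow (K * diam (Cyl a f w) * diam (Cyl a f v)) s).
  - apply rpow_mono; auto. split.
    + apply (diam_Cyl_nonneg a g f Hset). apply valid_app; auto.
    + apply (cylinder_product_bound a g f K Hset HK Hdist w Hw v Hv).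
  - rewrite !rpow_mult by (try apply Rmult_lt_0_compat; auto). right; ring.
Qed.

Variables (F X : R -> Prop).
Hypothesis F_in_cylinder : forall x, F x -> Cyl a f w x.
Hypothesis F_maps_into : forall x, F x -> X (Nat.iter (length w) f x).

Lemma cover_sum_pullback : forall t, cover_sum a g f s X t ->
  exists t', cover_sum a g f s F t' /\ t' <= scale * t.
Proof.
  intros t [ws [[Hvalid Hcov] Hsum]].
  set (An := cover_term a f s (prefix_cover w ws)).
  set (Bn := fun i => cover_term a f s ws i * scale).
  assert (HAB : forall i, 0 <= An i <= Bn i)
    by (intros i; split; [apply cover_term_nonneg|apply cover_term_prefix; auto]).
  assert (HBsum : Un_cv (fun N => sum_f_R0 Bn N) (t * scale)).
  { apply (Un_cv_ext (fun N => sum_f_R0 (cover_term a f s ws) N * scale)).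
    - intros N. unfold Bn. rewrite Rmult_comm, scal_sum. reflexivity.
    - apply CV_mult; [exact Hsum|]. intros e He. exists 0%nat. intros.
      unfold Rdist. rewrite Rminus_diag, Rabs_R0. auto. }
  destruct (Rseries_CV_comp An Bn HAB (exist _ _ HBsum)) as [t' Ht'].
  exists t'. split.
  - exists (prefix_cover w ws). split; [split|exact Ht'].
    + intros i u E. unfold prefix_cover in E. destruct (ws i) as [v|] eqn:Ev; inversion E.
      apply valid_app; eauto.
    + intros x Fx. destruct (Hcov _ (F_maps_into x Fx)) as [i [v [E Hv]]].
      exists i, (w ++ v). split; [unfold prefix_cover; rewrite E; reflexivity|].
      apply (Cyl_app a g f Hset). auto.
  - rewrite Rmult_comm.
    apply (@Rle_cv_lim _ _ _ _ (fun N => sum_growing An Bn N (fun i => proj2 (HAB i))) Ht' HBsum).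
Qed.

Lemma Ninf_pullback : (forall x, X x -> 0 <= x < 1) ->
  Ninf a g f s F <= scale * Ninf a g f s X.
Proof.
  intros HX.
  assert (HF : forall x, F x -> 0 <= x < 1) by (intros x Fx; apply (Cyl_unit a f w), F_in_cylinder; auto).
  destruct (Ninf_glb a g f s F HF) as [HlbF _].
  destruct (Ninf_glb a g f s X HX) as [_ HgreatestX].
  pose proof scale_pos as Hscale.
  set (C := scale) in *.
  set (q := Ninf a g f s F / C).
  assert (Hq : Ninf a g f s F = q * C) by (unfold q; field; lra).
  assert (q <= Ninf a g f s X).
  { apply HgreatestX. intros t Ht. destruct (cover_sum_pullback t Ht) as [t' [Ht' Hle]].
    fold C in Hle. apply HlbF in Ht'. nra. }
  nra.
Qed.

End Pullback.

Lemma strict_mono_ge : forall M : nat -> nat, (forall k, (M k < M (S k))%nat) ->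
  forall k, (k <= M k)%nat.
Proof. intros M HM k. induction k; [lia|]. specialize (HM k). lia. Qed.

Theorem mainTheorem9
  (a : nat -> R) (g : nat) (f : R -> R) (K : R)
  (Hset : setting a g f) (HK : 0 < K) (Hdist : bounded_distortion a g f K)
  (m : nat) (p : list nat -> R)
  (Hp : forall w, length w = m -> valid_word g w -> 0 <= p w <= 1)
  (eps : R) (Heps : 0 < eps) (s : R) (Hs : 0 < s <= 1)
  (M : nat -> nat) (HM : forall k, (M k < M (S k))%nat)
  (c : R) (Hc : 0 <= c < 1)
  (HN : forall k, (m < M k)%nat ->
     Ninf a g f s (fun x => 0 <= x < 1 /\ Gset a g f m p (M k) eps x)
       < c / rpow K s) :
  forall w, valid_word g w ->
    exists KC : nat, forall k, (KC < k)%nat ->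
      Ninf a g f s (fun x => Cyl a f w x /\ Gset a g f m p (M k) (eps / 2) x)
        < c * rpow (diam (Cyl a f w)) s.
Proof.
  intros w Hw. set (n := length w).
  (* Past [KC], the shift by [n = |w|] moves frequencies by at most [eps/2]. *)
  destruct (INR_unbounded (2 * INR n / eps)) as [N HNn].
  exists (m + N)%nat. intros k Hk.
  pose proof (strict_mono_ge M HM k).
  assert (HNM : INR N < INR (M k - m)) by (apply lt_INR; lia).
  assert (Hshift : INR n <= eps / 2 * INR (M k - m)).
  { replace (INR n) with (eps / 2 * (2 * INR n / eps)) by (field; lra).
    apply Rmult_le_compat_l; lra. }
  set (X := fun x => 0 <= x < 1 /\ Gset a g f m p (M k) eps x).
  (* [N^s(C_w ∩ G(eps/2)) <= K^s |C_w|^s N^s(G(eps)) < |C_w|^s c]. *)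
  apply Rle_lt_trans with (rpow K s * rpow (diam (Cyl a f w)) s * Ninf a g f s X).
  - apply (Ninf_pullback a g f K s Hset HK Hdist ltac:(lra) w Hw);
      [intros x Hx; apply Hx| |intros x Hx; apply Hx].
    intros x [_ Gx]. split; [apply (iter_unit a g f Hset); apply Gx|].
    apply Gset_shift; auto; lia.
  - pose proof (rpow_pos K s HK). pose proof (rpow_pos _ s (diam_Cyl_pos a g f Hset w Hw)).
    replace (c * rpow (diam (Cyl a f w)) s)
      with (rpow K s * rpow (diam (Cyl a f w)) s * (c / rpow K s)) by (field; lra).
    apply Rmult_lt_compat_l; [apply Rmult_lt_0_compat; auto|]. apply HN. lia.
Qed.
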